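(* There exist subspaces $\mathcal C$ of a bipartite space $\mathcal H=\mathcal H_A\otimes\mathcal H_B$ for which $N_B(\mathcal C)\subsetneq ST_B(\mathcal C)$.
   Context: A mixed state $\rho'$ is ''in'' $\mathcal C$ if $\mathrm{Tr}(P_{\mathcal C}\rho')=1$, where $P_{\mathcal C}$ is the projector onto $\mathcal C$. $N_B(\mathcal C)=\{\rho:\exists\rho'\text{ in }\mathcal C,\ \exists\mathcal O\text{ a super-operator acting only on }\mathcal H_B,\ \rho=\mathcal O(\rho')\}$. $ST_B(\mathcal C)=\{\rho:\exists\rho'\text{ in }\mathcal C,\ \mathrm{Tr}_B(\rho)=\mathrm{Tr}_B(\rho')\}$. *)

From HB Require Import structures.
From mathcomp Require Import all_boot all_order all_algebra.
Set Implicit Arguments. Unset Strict Implicit. Unset Printing Implicit Defensive.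
Import Order.TTheory GRing.Theory Num.Theory.
Local Open Scope ring_scope.

Section Quantum.
Variable C : numClosedFieldType.

Definition adjmx m n (A : 'M[C]_(m, n)) : 'M[C]_(n, m) := (map_mx Num.conj A)^T.

Definition psd n (A : 'M[C]_n) : Prop :=
  forall v : 'cV[C]_n, 0 <= (adjmx v *m A *m v) 0 0.

Definition density n (rho : 'M[C]_n) : Prop := psd rho /\ \tr rho = 1.

(* orthogonal projector (represents the subspace C = its range) *)
Definition orth_proj n (P : 'M[C]_n) : Prop := adjmx P = P /\ P *m P = P.

(* H = H_A (x) H_B, with basis index mxvec_index i j for |i>|j> *)
Definition pair_of_idx (dA dB : nat) (k : 'I_(dA * dB)) : 'I_dA * 'I_dB :=
  enum_val (cast_ord (esym (mxvec_cast dA dB)) k).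

Definition kron dA dB (X : 'M[C]_dA) (Y : 'M[C]_dB) : 'M[C]_(dA * dB) :=
  \matrix_(k, l) (X (pair_of_idx k).1 (pair_of_idx l).1 *
                  Y (pair_of_idx k).2 (pair_of_idx l).2).

Definition ptraceB dA dB (rho : 'M[C]_(dA * dB)) : 'M[C]_dA :=
  \matrix_(i, i') \sum_(j < dB) rho (mxvec_index i j) (mxvec_index i' j).

Definition in_subspace n (P rho' : 'M[C]_n) : Prop :=
  density rho' /\ \tr (P *m rho') = 1.

(* super-operator (CPTP map) on H_B, given by Kraus operators K_0..K_{r-1},
   with sum_k K_k^dag K_k = 1; applied as id_A (x) O_B *)
Definition superop_B dA dB (r : nat) (K : 'I_r -> 'M[C]_dB)
    (rho : 'M[C]_(dA * dB)) : 'M[C]_(dA * dB) :=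
  \sum_(k < r) (kron 1%:M (K k) *m rho *m adjmx (kron 1%:M (K k))).

Definition kraus_TP dB r (K : 'I_r -> 'M[C]_dB) : Prop :=
  \sum_(k < r) (adjmx (K k) *m K k) = 1%:M.

Definition N_B dA dB (P : 'M[C]_(dA * dB)) (rho : 'M[C]_(dA * dB)) : Prop :=
  density rho /\
  exists rho', in_subspace P rho' /\
  exists (r : nat) (K : 'I_r -> 'M[C]_dB), kraus_TP K /\ rho = superop_B K rho'.

Definition ST_B dA dB (P : 'M[C]_(dA * dB)) (rho : 'M[C]_(dA * dB)) : Prop :=
  density rho /\
  exists rho', in_subspace P rho' /\ ptraceB rho = ptraceB rho'.

End Quantum.

(* Take H_A = H_B = C^2 and the subspace H_A (x) |0>.  A state in it has the
   form R_A (x) |0><0|, so a channel acting on B turns it into R_A (x) sigma: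
   the diagonal of every state of N_B is a product p(i,j) = a_i s_j, whence
   p(0,0) p(1,1) = p(0,1) p(1,0).  The correlated state
   (|00><00| + |11><11|) / 2 violates this identity, yet it has the same
   reduced state I/2 on A as (I/2) (x) |0><0|, which lies in the subspace.
   The inclusion of N_B in ST_B holds for every subspace, because a
   trace-preserving channel on B does not change the partial trace over B. *)

From mathcomp Require Import all_boot all_order all_algebra ring.
Set Implicit Arguments. Unset Strict Implicit. Unset Printing Implicit Defensive.
Import Order.TTheory GRing.Theory Num.Theory.
Local Open Scope ring_scope.

Section Bipartite.
Variable C : numClosedFieldType.

Lemma pair_of_idx_mxvec m n (i : 'I_m) (j : 'I_n) :
  pair_of_idx (mxvec_index i j) = (i, j).
Proof. by rewrite /pair_of_idx cast_ordK enum_rankK. Qed.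

Lemma mxvec_index_eq m n (i i' : 'I_m) (j j' : 'I_n) :
  (mxvec_index i j == mxvec_index i' j') = (i == i') && (j == j').
Proof.
apply/eqP/andP => [eq_ij | [/eqP-> /eqP->]] //.
by have := congr1 (@pair_of_idx m n) eq_ij; rewrite !pair_of_idx_mxvec => -[-> ->].
Qed.

Lemma big_mxvec_index m n (F : 'I_(m * n) -> C) :
  \sum_k F k = \sum_i \sum_j F (mxvec_index i j).
Proof.
rewrite (reindex _ (curry_mxvec_bij _ _)) /= pair_bigA /=.
by apply: eq_bigr => -[i j].
Qed.

Lemma adjmxE m n (A : 'M[C]_(m, n)) i j : adjmx A i j = (A j i)^*.
Proof. by rewrite !mxE. Qed.

Lemma kron_mxvecE m n (X : 'M[C]_m) (Y : 'M[C]_n) i j i' j' :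
  kron X Y (mxvec_index i j) (mxvec_index i' j') = X i i' * Y j j'.
Proof. by rewrite mxE !pair_of_idx_mxvec. Qed.

Lemma mul_kron1_mxE m n (Y : 'M[C]_n) (R : 'M[C]_(m * n)) i j l :
  (kron 1%:M Y *m R) (mxvec_index i j) l = \sum_b Y j b * R (mxvec_index i b) l.
Proof.
rewrite mxE big_mxvec_index (bigD1 i) //= [X in _ + X]big1 ?addr0 => [|a ne_ai].
  by apply: eq_bigr => b _; rewrite kron_mxvecE mxE eqxx mul1r.
by apply: big1 => b _; rewrite kron_mxvecE mxE eq_sym (negbTE ne_ai) !mul0r.
Qed.

Lemma mul_mx_adj_kron1E m n (Y : 'M[C]_n) (R : 'M[C]_(m * n)) k i j :
  (R *m adjmx (kron 1%:M Y)) k (mxvec_index i j) =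
  \sum_b R k (mxvec_index i b) * (Y j b)^*.
Proof.
rewrite mxE big_mxvec_index (bigD1 i) //= [X in _ + X]big1 ?addr0 => [|a ne_ai].
  by apply: eq_bigr => b _; rewrite adjmxE kron_mxvecE mxE eqxx mul1r.
apply: big1 => b _.
by rewrite adjmxE kron_mxvecE mxE eq_sym (negbTE ne_ai) mul0r rmorph0 mulr0.
Qed.

Lemma superop_BE m n r (K : 'I_r -> 'M[C]_n) (R : 'M[C]_(m * n)) i j i' j' :
  superop_B K R (mxvec_index i j) (mxvec_index i' j') =
  \sum_k \sum_b \sum_b' K k j b * R (mxvec_index i b) (mxvec_index i' b') * (K k j' b')^*.
Proof.
rewrite /superop_B summxE; apply: eq_bigr => k _.
rewrite mul_mx_adj_kron1E; under eq_bigr => b' _ do rewrite mul_kron1_mxE mulr_suml.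
by rewrite exchange_big.
Qed.

Lemma sum_nat_eq_mull n (a : 'I_n) (F : 'I_n -> C) : \sum_k (k == a)%:R * F k = F a.
Proof.
rewrite (bigD1 a) //= eqxx mul1r big1 ?addr0 // => k /negbTE ->.
by rewrite mul0r.
Qed.

Lemma sum_nat_eq_mulr n (a : 'I_n) (F : 'I_n -> C) : \sum_k F k * (k == a)%:R = F a.
Proof. under eq_bigr => k _ do rewrite mulrC. exact: sum_nat_eq_mull. Qed.

Lemma ptraceB_superop_B m n r (K : 'I_r -> 'M[C]_n) (R : 'M[C]_(m * n)) :
  kraus_TP K -> ptraceB (superop_B K R) = ptraceB R.
Proof.
move=> TP_K; apply/matrixP => i i'; rewrite !mxE.
have TP_KE b' b : \sum_k \sum_j (K k j b')^* * K k j b = (b' == b)%:R.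
  have := congr1 (fun M : 'M[C]_n => M b' b) TP_K; rewrite /= summxE mxE => <-.
  by apply: eq_bigr => k _; rewrite mxE; apply: eq_bigr => j _; rewrite adjmxE.
under eq_bigr => j _ do rewrite superop_BE.
rewrite exchange_big.
under eq_bigr => k _ do rewrite exchange_big.
under eq_bigr => k _ do under eq_bigr => b _ do rewrite exchange_big.
rewrite exchange_big.
under eq_bigr => b _ do rewrite exchange_big.
apply: eq_bigr => b _.
transitivity (\sum_b' R (mxvec_index i b) (mxvec_index i' b') * (b' == b)%:R).
  apply: eq_bigr => b' _; rewrite -TP_KE mulr_sumr; apply: eq_bigr => k _.
  rewrite mulr_sumr; apply: eq_bigr => j _; ring.
exact: sum_nat_eq_mulr.
Qed.

Lemma N_B_sub_ST_B m n (P rho : 'M[C]_(m * n)) : N_B P rho -> ST_B P rho.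
Proof.
case=> dens_rho [R [in_R [r [K [TP_K rhoE]]]]]; split => //.
by exists R; rewrite rhoE ptraceB_superop_B.
Qed.

Lemma mxtrace_ptraceB m n (rho : 'M[C]_(m * n)) : \tr (ptraceB rho) = \tr rho.
Proof. by rewrite /mxtrace big_mxvec_index; apply: eq_bigr => i _; rewrite mxE. Qed.

Lemma ptraceBZ m n a (rho : 'M[C]_(m * n)) : ptraceB (a *: rho) = a *: ptraceB rho.
Proof. by apply/matrixP => i i'; rewrite !mxE mulr_sumr; under eq_bigr do rewrite mxE. Qed.

Lemma ptraceB_diag_mx m n (d : 'rV[C]_(m * n)) :
  ptraceB (diag_mx d) = diag_mx (\row_i \sum_j d 0 (mxvec_index i j)).
Proof.
apply/matrixP => i i'; rewrite !mxE -mulr_natr mulr_suml.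
by apply: eq_bigr => j _; rewrite mxE mxvec_index_eq eqxx andbT mulr_natr.
Qed.

End Bipartite.

Section Positivity.
Variable C : numClosedFieldType.

Lemma psd_formE n (A : 'M[C]_n) (v : 'cV[C]_n) :
  (adjmx v *m A *m v) 0 0 = \sum_k \sum_l (v k 0)^* * A k l * v l 0.
Proof.
rewrite [LHS]mxE exchange_big; apply: eq_bigr => l _.
by rewrite [_ 0 l]mxE mulr_suml; apply: eq_bigr => k _; rewrite adjmxE.
Qed.

Lemma psd_form_pair n (A : 'M[C]_n) i j x y :
  let v := \col_k (x * (k == i)%:R + y * (k == j)%:R) in
  (adjmx v *m A *m v) 0 0 =
  x^* * x * A i i + x^* * y * A i j + y^* * x * A j i + y^* * y * A j j.
Proof.
rewrite /= psd_formE.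
have pairE (F : 'I_n -> C) x' y' :
    \sum_k (x' * (k == i)%:R + y' * (k == j)%:R) * F k = x' * F i + y' * F j.
  transitivity (\sum_k (x' * F k * (k == i)%:R + y' * F k * (k == j)%:R)).
    by apply: eq_bigr => k _; rewrite mulrDl mulrAC [y' * _ * _]mulrAC.
  by rewrite big_split /= !sum_nat_eq_mulr.
under eq_bigr => k _ do under eq_bigr => l _ do rewrite !mxE mulrC.
under eq_bigr => k _ do
  rewrite pairE [x * (_ * _)]mulrCA [y * (_ * _)]mulrCA -mulrDr rmorphD !rmorphM !rmorph_nat.
by rewrite pairE; ring.
Qed.

Lemma psd_diag_ge0 n (A : 'M[C]_n) i : psd A -> 0 <= A i i.
Proof.
move=> /(_ (\col_k (1 * (k == i)%:R + 0 * (k == i)%:R))).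
by rewrite psd_form_pair rmorph1 rmorph0 !mul0r !mulr0 !addr0 !mul1r mul0r addr0.
Qed.

Lemma ge0_real_affine_eq0 (u c : C) :
  (forall t, t \is Num.real -> 0 <= t * u + c) -> u = 0.
Proof.
move=> ge0_line; have c_real : c \is Num.real.
  by have := ge0_line 0 (rpred0 _); rewrite mul0r add0r => /ger0_real.
have u_real : u \is Num.real.
  have /ger0_real := ge0_line 1 (rpred1 _); rewrite mul1r => uc_real.
  by rewrite -(addrK c u) rpredB.
apply/eqP; apply: contraT => u_neq0.
have t_real : - (c + 1) / u \is Num.real by rewrite rpredM ?rpredN ?rpredD ?rpredV ?rpred1.
have := ge0_line _ t_real; rewrite divfK // opprD addrAC addNr add0r.
by rewrite oppr_ge0 ler10.
Qed.

Lemma ge0_conj_affine_eq0 (a b c : C) :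
  (forall x, 0 <= x^* * a + x * b + c) -> a = 0 /\ b = 0.
Proof.
move=> ge0_form.
(* Restrict x to the real line and to the imaginary line. *)
have ab0 : a + b = 0.
  apply: (ge0_real_affine_eq0 (c := c)) => t /conj_Creal t_conj.
  by have := ge0_form t; rewrite t_conj -mulrDr.
have ba0 : 'i * (b - a) = 0.
  apply: (ge0_real_affine_eq0 (c := c)) => t /conj_Creal t_conj.
  suff -> : t * ('i * (b - a)) + c = ('i * t)^* * a + 'i * t * b + c by [].
  by rewrite [(_ * t)^*]rmorphM /= conjCi t_conj; ring.
move/eqP: ba0; rewrite mulf_eq0 (negbTE (neq0Ci _)) subr_eq0 => /eqP ba.
have /eqP : a *+ 2 = 0 by rewrite mulr2n -{2}ba.
by rewrite mulrn_eq0 /= => /eqP a0; rewrite ba.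
Qed.

Lemma psd_diag0_eq0 n (A : 'M[C]_n) i j :
  psd A -> A i i = 0 -> A i j = 0 /\ A j i = 0.
Proof.
move=> psdA Aii0; apply: (ge0_conj_affine_eq0 (c := A j j)) => x.
have := psdA (\col_k (x * (k == i)%:R + 1 * (k == j)%:R)).
by rewrite psd_form_pair Aii0 rmorph1 !mul1r mulr1 mulr0 add0r.
Qed.

Lemma psd_diag_mx n (d : 'rV[C]_n) : (forall k, 0 <= d 0 k) -> psd (diag_mx d).
Proof.
move=> d_ge0 v; rewrite psd_formE; apply: sumr_ge0 => k _.
have -> : \sum_l (v k 0)^* * diag_mx d k l * v l 0 = d 0 k * (v k 0 * (v k 0)^*).
  transitivity (\sum_l ((v k 0)^* * d 0 k * v l 0) * (l == k)%:R).
    by apply: eq_bigr => l _; rewrite mxE eq_sym -mulr_natr; ring.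
  by rewrite sum_nat_eq_mulr; ring.
by rewrite mulr_ge0 ?mul_conjC_ge0.
Qed.

Lemma psdZ n a (A : 'M[C]_n) : 0 <= a -> psd A -> psd (a *: A).
Proof.
by move=> a_ge0 psdA v; rewrite -scalemxAr -scalemxAl mxE mulr_ge0.
Qed.

End Positivity.

Section KetProjector.
Variables (C : numClosedFieldType) (dA dB : nat) (b0 : 'I_dB).

Definition proj_ketB : 'M[C]_(dA * dB) :=
  diag_mx (\row_k ((pair_of_idx k).2 == b0)%:R).

Lemma orth_proj_proj_ketB : orth_proj proj_ketB.
Proof.
split.
  rewrite /adjmx map_diag_mx tr_diag_mx; congr diag_mx.
  by apply/rowP => k; rewrite !mxE rmorph_nat.
rewrite mulmx_diag; congr diag_mx; apply/rowP => k.
by rewrite !mxE; case: (_ == _); rewrite ?mulr1 ?mulr0.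
Qed.

Lemma psd_proj_ketB : psd proj_ketB.
Proof. by apply: psd_diag_mx => k; rewrite mxE ler0n. Qed.

Lemma ptraceB_proj_ketB : ptraceB proj_ketB = 1%:M.
Proof.
rewrite ptraceB_diag_mx -diag_const_mx; congr diag_mx; apply/rowP => i.
rewrite !mxE; transitivity (\sum_j (j == b0)%:R * (1 : C)); last exact: sum_nat_eq_mull.
by apply: eq_bigr => j _; rewrite !mxE pair_of_idx_mxvec mulr1.
Qed.

Lemma in_proj_ketB_supp (R : 'M[C]_(dA * dB)) i b l :
  in_subspace proj_ketB R -> b != b0 ->
  R (mxvec_index i b) l = 0 /\ R l (mxvec_index i b) = 0.
Proof.
case=> [[psdR trR] trPR] ne_bb0; apply: psd_diag0_eq0 => //.
(* The diagonal weight of R outside the range of the projector is tr R - tr (P R) = 0. *)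
pose p (k : 'I_(dA * dB)) : C := ((pair_of_idx k).2 == b0)%:R.
have outside_ge0 k : 0 <= (1 - p k) * R k k.
  by rewrite mulr_ge0 ?psd_diag_ge0 // /p; case: (_ == _); rewrite ?subrr ?subr0 ?ler01.
have outside0 : \sum_k (1 - p k) * R k k = 0.
  under eq_bigr do rewrite mulrBl mul1r.
  rewrite sumrB; have -> : \sum_k p k * R k k = \tr (proj_ketB *m R).
    by rewrite mul_diag_mx; apply: eq_bigr => k _; rewrite !mxE.
  by rewrite trPR -trR; apply: subrr.
have := psumr_eq0P (fun k _ => outside_ge0 k) outside0 (i := mxvec_index i b) isT.
by rewrite /p pair_of_idx_mxvec (negbTE ne_bb0) subr0 mul1r.
Qed.

Lemma superop_B_proj_ketBE r (K : 'I_r -> 'M[C]_dB) R i j i' j' :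
  in_subspace proj_ketB R ->
  superop_B K R (mxvec_index i j) (mxvec_index i' j') =
  R (mxvec_index i b0) (mxvec_index i' b0) * \sum_k K k j b0 * (K k j' b0)^*.
Proof.
move=> inR; rewrite superop_BE mulr_sumr; apply: eq_bigr => k _.
rewrite (bigD1 b0) //= [X in _ + X]big1 ?addr0 => [|b ne_bb0]; last first.
  by apply: big1 => b' _; rewrite (in_proj_ketB_supp _ _ inR ne_bb0).1 mulr0 mul0r.
rewrite (bigD1 b0) //= [X in _ + X]big1 ?addr0 => [|b' ne_b'b0]; last first.
  by rewrite (in_proj_ketB_supp _ _ inR ne_b'b0).2 mulr0 mul0r.
ring.
Qed.

Lemma N_B_proj_ketB_diag_mul rho i i' j j' :
  N_B proj_ketB rho ->
  let p i j := rho (mxvec_index i j) (mxvec_index i j) in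
  p i j * p i' j' = p i j' * p i' j.
Proof. by case=> _ [R [inR [r [K [_ ->]]]]] /=; rewrite !superop_B_proj_ketBE //; ring. Qed.

End KetProjector.

Section Witness.
Variable C : numClosedFieldType.

(* (|00><00| + |11><11|) / 2 and (I/2) (x) |0><0| *)
Definition corr_state : 'M[C]_(2 * 2) :=
  2^-1 *: diag_mx (\row_k ((pair_of_idx k).1 == (pair_of_idx k).2)%:R).

Definition ket0_state : 'M[C]_(2 * 2) := 2^-1 *: proj_ketB C 2 ord0.

Lemma corr_stateE (i j : 'I_2) :
  corr_state (mxvec_index i j) (mxvec_index i j) = 2^-1 * (i == j)%:R.
Proof. by rewrite !mxE eqxx pair_of_idx_mxvec mulr1n. Qed.

Lemma density_ptraceB_half (rho : 'M[C]_(2 * 2)) :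
  psd rho -> ptraceB rho = 2^-1%:M -> density rho.
Proof.
move=> psd_rho ptr_rho; split => //.
by rewrite -mxtrace_ptraceB ptr_rho mxtrace_scalar -(mulr_natr (2^-1 : C)) mulVf ?pnatr_eq0.
Qed.

Lemma ptraceB_corr_state : ptraceB corr_state = 2^-1%:M.
Proof.
rewrite ptraceBZ ptraceB_diag_mx -scalemx1 -diag_const_mx; congr (_ *: diag_mx _).
apply/rowP => i; rewrite !mxE; transitivity (\sum_j (j == i)%:R * (1 : C)).
  by apply: eq_bigr => j _; rewrite !mxE pair_of_idx_mxvec eq_sym mulr1.
exact: sum_nat_eq_mull.
Qed.

Lemma ptraceB_ket0_state : ptraceB ket0_state = 2^-1%:M.
Proof. by rewrite ptraceBZ ptraceB_proj_ketB scalemx1. Qed.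

Lemma ST_B_corr_state : ST_B (proj_ketB C 2 ord0) corr_state.
Proof.
have half_ge0 : 0 <= (2^-1 : C) by rewrite invr_ge0 ler0n.
split.
  apply: density_ptraceB_half ptraceB_corr_state; apply: psdZ half_ge0 _.
  by apply: psd_diag_mx => k; rewrite mxE ler0n.
exists ket0_state; rewrite ptraceB_corr_state ptraceB_ket0_state.
have dens_ket0 : density ket0_state.
  exact: density_ptraceB_half (psdZ half_ge0 (psd_proj_ketB ord0)) ptraceB_ket0_state.
split=> //; split=> //.
have [_ idem_P] := orth_proj_proj_ketB C 2 (ord0 : 'I_2).
by rewrite -scalemxAr idem_P; case: dens_ket0.
Qed.

Lemma not_N_B_corr_state : ~ N_B (proj_ketB C 2 ord0) corr_state.
Proof.
move=> /(N_B_proj_ketB_diag_mul ord0 ord_max ord0 ord_max) /=.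
rewrite !corr_stateE /= mulr0 mul0r mulr1 => /eqP.
by rewrite mulf_eq0 orbb invr_eq0 pnatr_eq0.
Qed.

End Witness.

Theorem mainTheorem9 (C : numClosedFieldType) :
  exists (dA dB : nat) (P : 'M[C]_(dA * dB)),
    orth_proj P /\
    (forall rho, N_B P rho -> ST_B P rho) /\
    (exists rho, ST_B P rho /\ ~ N_B P rho).
Proof.
exists 2%N, 2%N, (proj_ketB C 2 ord0); split; [|split].
- exact: orth_proj_proj_ketB.
- exact: N_B_sub_ST_B.
- by exists (corr_state C); split; [apply: ST_B_corr_state | apply: not_N_B_corr_state].
Qed.
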